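(* Let $M$ be the bounded distributive lattice of subsets of $\mathbb{N}$ that are either finite or equal to $\mathbb{N}$ (ordered by inclusion; this is a $\kappa$-frame for $\kappa=\aleph_0$). Then $M$ is d-reduced. Let $I=\{S\in M\mid 2\notin S\}$; then $I$ is an ideal of $M$, equal to the pseudocomplement $(\downarrow\{2\})^*$ in the lattice of ideals of $M$, and the quotient $M/\nabla_I$ has exactly three elements $[\emptyset]<[\{2\}]<[\mathbb{N}]$, so it is isomorphic to the three-element chain and is not d-reduced. Hence quotients of d-reduced $\kappa$-frames need not be d-reduced.
   Context: For $\kappa=\aleph_0$, $\kappa$-frames are bounded distributive lattices and $\kappa$-ideals are (nonempty) lattice ideals. A congruence is an equivalence relation that is a sublattice (preserving bounds) of $M\times M$. For an ideal $I$, $\nabla_I=\{(x,y)\mid x\vee i=y\vee i\text{ for some }i\in I\}$, the congruence generated by $\{(0,i)\mid i\in I\}$. A $\kappa$-frame $L$ is d-reduced if $\mathfrak{D}_L=\{(a,b)\mid\forall x\in L:\ a\wedge x=0\iff b\wedge x=0\}$ is the diagonal. The pseudocomplement $J^*$ of an ideal $J$ is the largest ideal $K$ with $K\cap J=\{0\}$. *)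

From Stdlib Require Import Arith.

Definition nset := nat -> Prop.

Definition seteq (A B : nset) : Prop := forall k, A k <-> B k.
Definition subset (A B : nset) : Prop := forall k, A k -> B k.
Definition set0 : nset := fun _ => False.
Definition setT : nset := fun _ => True.
Definition set1 (n : nat) : nset := fun k => k = n.
Definition setU (A B : nset) : nset := fun k => A k \/ B k.
Definition setI (A B : nset) : nset := fun k => A k /\ B k.

Definition finite_set (A : nset) : Prop := exists n, forall k, A k -> k < n.

Definition inM (A : nset) : Prop := finite_set A \/ seteq A setT.

(* d-reducedness of a bounded lattice presented by a carrier predicate P,
   an equality relation eqv, a meet and a bottom: the relation
   D = {(a,b) | forall x, a /\ x = 0 <-> b /\ x = 0} is the diagonal. *)
Definition d_reduced {T : Type} (P : T -> Prop) (eqv : T -> T -> Prop)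
  (meet : T -> T -> T) (bot : T) : Prop :=
  forall a b, P a -> P b ->
    (forall x, P x -> (eqv (meet a x) bot <-> eqv (meet b x) bot)) ->
    eqv a b.

Definition is_ideal (J : nset -> Prop) : Prop :=
  (forall S, J S -> inM S) /\
  (exists S, J S) /\
  (forall S T, J S -> inM T -> subset T S -> J T) /\
  (forall S T, J S -> J T -> J (setU S T)).

Definition down (a : nset) : nset -> Prop := fun S => inM S /\ subset S a.

Definition meets_trivially (K J : nset -> Prop) : Prop :=
  forall S, K S -> J S -> seteq S set0.

Definition is_pseudocomplement (J K : nset -> Prop) : Prop :=
  is_ideal K /\ meets_trivially K J /\
  (forall K', is_ideal K' -> meets_trivially K' J -> forall S, K' S -> K S).

Definition nabla (I : nset -> Prop) (x y : nset) : Prop :=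
  exists i, I i /\ seteq (setU x i) (setU y i).

(* order on the quotient M / nabla_I : [a] <= [b] iff [a \/ b] = [b] *)
Definition qle (I : nset -> Prop) (a b : nset) : Prop := nabla I (setU a b) b.

Definition I2 : nset -> Prop := fun S => inM S /\ ~ S 2.

(* M is d-reduced because singletons separate points: a set A is recovered
   from the family of singletons {k} with A ∩ {k} = ∅.  An element i of
   I = {S ∈ M | 2 ∉ S} is finite, so joining with i can neither change
   membership of 2 nor turn a finite set into ℕ; these are exactly the two
   invariants separating [∅], [{2}] and [ℕ], and every element of M falls into
   one of these classes.  In the quotient, [{2}] and [ℕ] meet an element [x]
   trivially precisely when 2 ∉ x, so they have the same annihilator although
   they are distinct: M/∇_I is not d-reduced. *)
From Stdlib Require Import Arith Lia Classical.

Lemma inM_set0 : inM set0.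
Proof. left; exists 0; intros k []. Qed.

Lemma inM_setT : inM setT.
Proof. right; intro k; tauto. Qed.

Lemma inM_set1 n : inM (set1 n).
Proof. left; exists (S n); unfold set1; intros; lia. Qed.

Lemma inM_setU A B : inM A -> inM B -> inM (setU A B).
Proof.
  unfold inM, finite_set, seteq, setU, setT.
  intros [[n Hn]|HA] [[m Hm]|HB].
  - left; exists (n + m); intros k [h|h]; [apply Hn in h|apply Hm in h]; lia.
  - right; intro k; split; auto; intros _; right; apply HB; auto.
  - right; intro k; split; auto; intros _; left; apply HA; auto.
  - right; intro k; split; auto; intros _; left; apply HA; auto.
Qed.

Lemma inM_setI A B : inM A -> inM B -> inM (setI A B).
Proof.
  unfold inM, finite_set, seteq, setI, setT.
  intros [[n Hn]|HA] [[m Hm]|HB].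
  - left; exists n; intros k [h _]; auto.
  - left; exists n; intros k [h _]; auto.
  - left; exists m; intros k [_ h]; auto.
  - right; intro k; split; auto; intros _; split; [apply HA|apply HB]; auto.
Qed.

Lemma setI_set1_empty A k : seteq (setI A (set1 k)) set0 <-> ~ A k.
Proof.
  unfold seteq, setI, set1, set0; split.
  - intros E h; apply (E k); auto.
  - intros h j; split; [intros [x e]; subst; auto | intros []].
Qed.

Lemma M_d_reduced : d_reduced inM seteq setI set0.
Proof.
  intros a b _ _ H k.
  assert (Hk := H (set1 k) (inM_set1 k)).
  rewrite !setI_set1_empty in Hk.
  split; intro h; apply NNPP; tauto.
Qed.

Lemma I2_ideal : is_ideal I2.
Proof.
  split; [intros S []; auto|].
  split; [exists set0; split; [apply inM_set0 | intros []]|].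
  split.
  - intros S T [_ h2] HT sub; split; auto.
  - intros S T [HS h2] [HT h2']; split.
    + apply inM_setU; auto.
    + intros [x|x]; auto.
Qed.

Lemma I2_pseudocomplement : is_pseudocomplement (down (set1 2)) I2.
Proof.
  split; [apply I2_ideal|]. split.
  - intros S [_ h2] [_ sub] k; unfold set0; split; [|intros []].
    intro h; assert (e := sub k h); unfold set1 in e; subst; auto.
  - intros K' [Kin [_ [Kdown _]]] Ktriv S HS. split; auto. intro h2.
    assert (K1 : K' (set1 2)).
    { apply (Kdown S); auto using inM_set1. unfold set1; intros k e; subst; auto. }
    apply (Ktriv _ K1 (conj (inM_set1 2) (fun k h => h)) 2); reflexivity.
Qed.

Lemma nabla_I2_mem2 x y : nabla I2 x y -> (x 2 <-> y 2).
Proof.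
  intros [i [[_ Hi] E]]; unfold setU in E.
  split; intro h; [destruct (proj1 (E 2) (or_introl h))
                  |destruct (proj2 (E 2) (or_introl h))]; tauto.
Qed.

Lemma nabla_I2_setT_finite a : finite_set a -> ~ nabla I2 a setT.
Proof.
  intros [n Hn] [i [[[[m Hm]|HiT] Hi2] E]].
  - destruct (proj2 (E (n + m)) (or_introl I)) as [h|h];
      [apply Hn in h|apply Hm in h]; lia.
  - apply Hi2, HiT; exact I.
Qed.

Lemma nabla_I2_set0 x : inM x -> (nabla I2 x set0 <-> ~ x 2).
Proof.
  intros Hx; split.
  - intros H h; apply (nabla_I2_mem2 _ _ H) in h; exact h.
  - intro h2; exists x; split; [split; auto|].
    intro k; unfold setU, set0; tauto.
Qed.

Lemma M_nabla_I2_classes a :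
  inM a -> nabla I2 a set0 \/ nabla I2 a (set1 2) \/ nabla I2 a setT.
Proof.
  intros Ha; destruct (classic (a 2)) as [h|h].
  - destruct Ha as [[n Hn]|HT].
    + right; left; exists (fun k => a k /\ k <> 2); split.
      * split; [left; exists n; intros k [x _]; auto | intros [_ x]; auto].
      * intro k; unfold setU, set1; split.
        { intro x; destruct (Nat.eq_dec k 2); [left|right]; tauto. }
        { intros [e|[x _]]; [left; subst|left]; auto. }
    + right; right; exists set0; split; [split; [apply inM_set0 | intros []]|].
      intro k; unfold setU, setT, set0; split; [tauto|intros _; left; apply HT; exact I].
  - left; apply nabla_I2_set0; auto.
Qed.

Lemma nabla_I2_of_seteq x y : seteq x y -> nabla I2 x y.
Proof.
  intro E; exists set0; split; [split; [apply inM_set0 | intros []]|].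
  intro k; unfold setU, set0; rewrite (E k); tauto.
Qed.

Lemma quotient_not_d_reduced : ~ d_reduced inM (nabla I2) setI set0.
Proof.
  intro D; apply (nabla_I2_setT_finite (set1 2)).
  - exists 3; unfold set1; intros; lia.
  - apply D; auto using inM_set1, inM_setT.
    intros x Hx.
    rewrite !nabla_I2_set0 by auto using inM_setI, inM_set1, inM_setT.
    unfold setI, set1, setT; tauto.
Qed.

Theorem mainTheorem15 :
  (inM set0 /\ inM setT /\
   (forall A B, inM A -> inM B -> inM (setU A B) /\ inM (setI A B))) /\
  d_reduced inM seteq setI set0 /\
  is_ideal I2 /\
  is_pseudocomplement (down (set1 2)) I2 /\
  (forall a, inM a -> nabla I2 a set0 \/ nabla I2 a (set1 2) \/ nabla I2 a setT) /\
  ~ nabla I2 set0 (set1 2) /\ ~ nabla I2 (set1 2) setT /\ ~ nabla I2 set0 setT /\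
  qle I2 set0 (set1 2) /\ qle I2 (set1 2) setT /\
  ~ d_reduced inM (nabla I2) setI set0.
Proof.
  assert (fin0 : finite_set set0) by (exists 0; intros k []).
  assert (fin2 : finite_set (set1 2)) by (exists 3; unfold set1; intros; lia).
  split; [split; [apply inM_set0|split; [apply inM_setT|]]|].
  { intros; split; auto using inM_setU, inM_setI. }
  split; [apply M_d_reduced|].
  split; [apply I2_ideal|].
  split; [apply I2_pseudocomplement|].
  split; [apply M_nabla_I2_classes|].
  split; [intro H; apply (nabla_I2_mem2 _ _ H); reflexivity|].
  split; [apply nabla_I2_setT_finite; auto|].
  split; [apply nabla_I2_setT_finite; auto|].
  split; [apply nabla_I2_of_seteq; unfold seteq, setU, set0; tauto|].
  split; [apply nabla_I2_of_seteq; unfold seteq, setU, set1, setT; tauto|].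
  apply quotient_not_d_reduced.
Qed.
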